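(* Let $\Phi_{\vec p}=\sum_{k,l}p_{kl}U_{kl}\otimes\overline{U}_{kl}$ be an arbitrary Weyl channel. In the reordered product basis $\{|j\oplus k,j\rangle:\ k,j\in\{0,\dots,N-1\}\}$ the superoperator $\Phi_{\vec p}$ is block diagonal, $\Phi_{\vec p}=\bigoplus_{k=0}^{N-1}\Phi^{(k)}_{\vec p}$, where each block $\Phi^{(k)}_{\vec p}=\sum_{k'}\big(\sum_lp_{k'l}\,\omega^{kl}\big)X^{k'}$ is an $N\times N$ circulant matrix. Consequently the spectrum of $\Phi_{\vec p}$ is contained in the regular $N$-gon with vertices $1,\omega,\dots,\omega^{N-1}$ (the convex hull of the $N$-th roots of unity). Moreover the block $\Phi^{(0)}_{\vec p}$ equals $T(\Phi_{\vec p})=\sum_kq_kX^k$ with $q_k=\sum_lp_{kl}$, so the spectrum of $\Phi_{\vec p}$ contains the spectrum of $T(\Phi_{\vec p})$.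
   Context: Let $N\ge2$, $\omega=e^{2\pi i/N}$, $X|j\rangle=|j\oplus1\rangle$ (addition mod $N$), $Z=\mathrm{diag}(1,\omega,\dots,\omega^{N-1})$, Weyl unitaries $U_{kl}=X^kZ^l$. Maps on $N\times N$ matrices are identified with superoperators acting on $|A\rangle\rangle=\sum A_{ij}|i\rangle|j\rangle$ ($\rho\mapsto K\rho K^\dagger$ corresponds to $K\otimes\overline K$). A Weyl channel is $\Phi_{\vec p}=\sum_{k,l}p_{kl}U_{kl}\otimes\overline{U}_{kl}$ with $(p_{kl})$ a probability vector; its hyper-decoherence is the $N\times N$ matrix $T(\Phi)_{ij}=\langle ii|\Phi|jj\rangle=\mathrm{Tr}[|i\rangle\langle i|\,\Phi(|j\rangle\langle j|)]$. *)

From mathcomp Require Import all_boot all_algebra.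
From mathcomp Require Import reals trigo.
From mathcomp Require Export complex mxtens.
Set Implicit Arguments. Unset Strict Implicit. Unset Printing Implicit Defensive.
Import GRing.Theory Num.Theory.
Local Open Scope ring_scope.
Local Open Scope complex_scope.

Section Weyl.
Variables (R : realType) (N : nat).
Local Notation C := R[i].

Definition omega : C := Complex (cos (2 * pi / N%:R)) (sin (2 * pi / N%:R)).

Definition addN (j k : 'I_N) : 'I_N :=
  Ordinal (ltn_pmod (j + k) (leq_ltn_trans (leq0n j) (ltn_ord j))).

(* matrix power for N x N matrices (N is not syntactically a successor) *)
Definition mxpowN (A : 'M[C]_N) (k : nat) : 'M[C]_N := iter k (mulmx A) 1%:M.

(* X |j> = |j (+) 1>, i.e. X_{a b} = [a = b (+) 1] *)
Definition shiftX : 'M[C]_N := \matrix_(a < N, b < N) ((nat_of_ord a == ((nat_of_ord b + 1) %% N)%N)%:R).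
Definition clockZ : 'M[C]_N := \matrix_(a < N, b < N) ((a == b)%:R * omega ^+ b).

Definition weylU (k l : 'I_N) : 'M[C]_N := mxpowN shiftX k *m mxpowN clockZ l.

(* superoperator of rho |-> K rho K^dagger : K (x) conj K, in the basis |i>|j>
   indexed by mxtens_index (i, j) *)
Definition superop (K : 'M[C]_N) : 'M[C]_(N * N) := K *t map_mx conjc K.

Definition prob_vector (p : 'I_N -> 'I_N -> R) : Prop :=
  (forall k l, 0 <= p k l) /\ \sum_(k < N) \sum_(l < N) p k l = 1.

Definition weyl_channel (p : 'I_N -> 'I_N -> R) : 'M[C]_(N * N) :=
  \sum_(k < N) \sum_(l < N) (p k l)%:C *: superop (weylU k l).

Definition hyper_decoherence (Phi : 'M[C]_(N * N)) : 'M[C]_N :=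
  \matrix_(i, j) Phi (mxtens_index (i, i)) (mxtens_index (j, j)).

Definition weyl_block (p : 'I_N -> 'I_N -> R) (k : 'I_N) : 'M[C]_N :=
  \sum_(k' < N) (\sum_(l < N) (p k' l)%:C * omega ^+ (k * l)) *: mxpowN shiftX k'.

Definition in_Ngon (z : C) : Prop :=
  exists w : 'I_N -> R, (forall k, 0 <= w k) /\ \sum_(k < N) w k = 1 /\
    z = \sum_(k < N) (w k)%:C * omega ^+ k.

End Weyl.

(* U_kl (x) conj U_kl maps |c, d> to omega^((c - d) l) |c (+) k, d (+) k>, so it
   preserves the difference c (-) d: in the basis |j (+) K, j> the channel is block
   diagonal, block K being the circulant sum_k' (sum_l p_k'l omega^(K l)) X^k'.
   The spectrum of a block-diagonal matrix is the union of the spectra of its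
   blocks, and the Fourier vectors diagonalize every circulant, so the eigenvalues
   of block K are the sums sum_(k',l) p_k'l omega^(K l + m k'), i.e. convex
   combinations of N-th roots of unity. Block 0 is T(Phi) itself. *)

From mathcomp Require Import all_boot all_order all_algebra.
From mathcomp Require Import reals trigo.
From mathcomp Require Import complex mxtens.
From mathcomp Require Import ring lra.
Set Implicit Arguments. Unset Strict Implicit. Unset Printing Implicit Defensive.
Import Order.TTheory GRing.Theory Num.Theory.
Local Open Scope ring_scope.
Local Open Scope complex_scope.

Lemma sum_unity_root_expr (F : idomainType) (n : nat) (x : F) : x ^+ n = 1 ->
  \sum_(m < n) x ^+ m = if x == 1 then n%:R else 0.
Proof.
case: eqP => [-> _ | /eqP x_neq1 xn1].
  by under eq_bigr do rewrite expr1n; rewrite sumr_const card_ord.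
have /eqP : (x - 1) * \sum_(m < n) x ^+ m = 0 by rewrite -subrX1 xn1 subrr.
by rewrite mulf_eq0 subr_eq0 (negbTE x_neq1) => /eqP.
Qed.

Lemma sum_delta (R : pzSemiRingType) (I : finType) (i : I) (F : I -> R) :
  \sum_j (j == i)%:R * F j = F i.
Proof.
by rewrite (bigD1 i) //= eqxx mul1r big1 ?addr0 // => j /negbTE ->; rewrite mul0r.
Qed.

Section BlockDiagonal.
Variables (F : fieldType) (m n d : nat).
Variables (sigma : 'I_m * 'I_n -> 'I_d) (sigma' : 'I_d -> 'I_m * 'I_n).
Hypotheses (sigmaK : cancel sigma sigma') (sigma'K : cancel sigma' sigma).
Variable A : 'M[F]_d.
Hypothesis A_offdiag :
  forall K K' j j', K != K' -> A (sigma (K, j)) (sigma (K', j')) = 0.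

Definition diag_block K : 'M[F]_n := \matrix_(j, j') A (sigma (K, j)) (sigma (K, j')).

Lemma sum_reindex_block (G : 'I_d -> F) :
  \sum_x G x = \sum_K \sum_j G (sigma (K, j)).
Proof.
rewrite pair_big (reindex sigma) /=; first by apply: eq_big => // -[].
exact: onW_bij (Bijective sigmaK sigma'K).
Qed.

Lemma mulmx_block_entry (v : 'rV[F]_d) K j' :
  (v *m A) 0 (sigma (K, j')) = (\row_j v 0 (sigma (K, j)) *m diag_block K) 0 j'.
Proof.
rewrite !mxE sum_reindex_block (bigD1 K) //= [X in _ + X]big1 ?addr0.
  by apply: eq_bigr => j _; rewrite !mxE.
by move=> K2 nK; apply: big1 => j _; rewrite A_offdiag ?mulr0.
Qed.

Lemma eigenvalue_diag_block K z :
  eigenvalue (diag_block K) z -> eigenvalue A z.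
Proof.
case/eigenvalueP => u uB u_neq0.
pose v := \row_x if (sigma' x).1 == K then u 0 (sigma' x).2 else 0.
have vE K2 j : v 0 (sigma (K2, j)) = if K2 == K then u 0 j else 0.
  by rewrite mxE sigmaK.
apply/eigenvalueP; exists v.
  apply/rowP => x; rewrite -[x]sigma'K; case: (sigma' x) => K2 j'.
  rewrite mulmx_block_entry [RHS]mxE vE.
  have [-> | nK] := altP eqP; last first.
    by rewrite mulr0 mxE big1 // => j _; rewrite [(\row__ _) 0 j]mxE vE (negbTE nK) mul0r.
  rewrite (_ : \row_j _ = u); first by rewrite uB mxE.
  by apply/rowP => j; rewrite mxE vE eqxx.
have [j uj_neq0] := rV0Pn _ u_neq0.
by apply/rV0Pn; exists (sigma (K, j)); rewrite vE eqxx.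
Qed.

Lemma eigenvalue_block_diagP z :
  reflect (exists K, eigenvalue (diag_block K) z) (eigenvalue A z).
Proof.
apply: (iffP idP) => [|[K]]; last exact: eigenvalue_diag_block.
case/eigenvalueP => v vA v_neq0.
have [x] := rV0Pn _ v_neq0; rewrite -[x]sigma'K; case: (sigma' x) => K j0 vKj0.
exists K; apply/eigenvalueP; exists (\row_j v 0 (sigma (K, j))).
  by apply/rowP => j'; rewrite -mulmx_block_entry vA !mxE.
by apply/rV0Pn; exists j0; rewrite mxE.
Qed.

End BlockDiagonal.

Section CyclicIndex.
Variable N : nat.
Implicit Types a b c k : 'I_N.

Definition subN a b : 'I_N :=
  Ordinal (ltn_pmod (a + (N - b)) (leq_ltn_trans (leq0n a) (ltn_ord a))).

Lemma addNC a b : addN a b = addN b a.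
Proof. by apply: val_inj; rewrite /= addnC. Qed.

Lemma addNAC a b c : addN (addN a b) c = addN (addN a c) b.
Proof. by apply: val_inj; rewrite /= !modnDml addnAC. Qed.

Lemma addNI a : injective (addN a).
Proof.
move=> b c /(congr1 val) /= /eqP; rewrite eqn_modDl !modn_small // => /eqP.
exact: val_inj.
Qed.

Lemma subNK a b : addN b (subN a b) = a.
Proof.
apply: val_inj; rewrite /= modnDmr addnCA subnKC 1?ltnW //.
by rewrite modnDr modn_small.
Qed.

Lemma eq_addN a b k : (a == addN b k) = (k == subN a b).
Proof. by rewrite -{1}(subNK a b) (inj_eq (@addNI b)) eq_sym. Qed.

Lemma expr_addN (R : pzSemiRingType) (x : R) a b :
  x ^+ N = 1 -> x ^+ addN a b = x ^+ a * x ^+ b.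
Proof. by move=> xN1; rewrite expr_mod // exprD. Qed.

Lemma expr_subN (R : unitRingType) (x : R) a b :
  x ^+ N = 1 -> x ^+ subN a b = x ^+ a / x ^+ b.
Proof.
move=> xN1; have N_gt0 : (0 < N)%N := leq_ltn_trans (leq0n a) (ltn_ord a).
have x_unit : x \is a GRing.unit by rewrite -(unitrX_pos _ N_gt0) xN1 unitr1.
by rewrite expr_mod // exprD exprB 1?ltnW // xN1 mul1r.
Qed.

End CyclicIndex.

Section RootOfUnity.
Variables (R : realType) (N : nat).
Hypothesis N_gt0 : (0 < N)%N.
Local Notation w := (omega R N).
Let theta : R := 2 * pi / N%:R.

Lemma cos_neq1 (x : R) : 0 < x < pi *+ 2 -> cos x != 1.
Proof.
move=> /andP[x_gt0 x_lt2pi].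
(* cos x = 1 - 2 sin (x / 2) ^ 2 *)
have half_gt0 : 0 < sin (x / 2).
  by apply: sin_gt0_pi; rewrite divr_gt0 //= ltr_pdivrMr // mulr_natr.
have -> : x = (x / 2) *+ 2 by rewrite -mulr_natr divfK ?pnatr_eq0.
rewrite cos_mulr2n cos2sin2 lt_eqF //.
by move: (exprn_gt0 2 half_gt0); lra.
Qed.

Lemma omegaX k : w ^+ k = Complex (cos (theta *+ k)) (sin (theta *+ k)).
Proof.
elim: k => [|k IH]; first by rewrite expr0 mulr0n cos0 sin0.
rewrite exprS IH /omega -/theta mulrS cosD sinD.
by congr Complex; ring.
Qed.

Lemma omega_prim : N.-primitive_root w.
Proof.
apply/andP; split => //; apply/forallP => i; rewrite unity_rootE omegaX.
have thetaN : theta *+ N = pi *+ 2.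
  by rewrite -mulr_natr divfK ?pnatr_eq0 -?lt0n // mulr_natl.
have [iN | iN] := eqVneq i.+1 N; first by rewrite iN thetaN cos2pi sin2pi eqxx.
rewrite eqbF_neg; apply: contraNN (@cos_neq1 (theta *+ i.+1) _) => [/eqP[-> _] //|].
have theta_gt0 : 0 < theta by rewrite divr_gt0 ?ltr0n // mulr_gt0 ?pi_gt0.
by rewrite -thetaN pmulrn_lgt0 // theta_gt0 ltr_pMn2l // ltn_neqAle iN ltn_ord.
Qed.

Lemma conj_omegaX n : (w ^+ n)^*%R = w ^- n.
Proof.
apply/esym/mulr1_eq; rewrite omegaX /GRing.mul /=.
by congr Complex; [rewrite mulrN opprK -!expr2 cos2Dsin2 | rewrite mulrN mulrC addNr].
Qed.

End RootOfUnity.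

Lemma in_Ngon_convex (R : realType) (N : nat) (I : finType) (a : I -> R) (e : I -> nat) :
  (0 < N)%N -> (forall i, 0 <= a i) -> \sum_i a i = 1 ->
  in_Ngon N (\sum_i (a i)%:C * omega R N ^+ e i).
Proof.
move=> N_gt0 a_ge0 a_sum1.
pose r i : 'I_N := Ordinal (ltn_pmod (e i) N_gt0).
exists (fun k => \sum_(i | r i == k) a i); split; [|split].
- by move=> k; apply: sumr_ge0.
- by rewrite -[RHS]a_sum1 (partition_big r xpredT).
rewrite (partition_big r xpredT) //; apply: eq_bigr => k _.
rewrite rmorph_sum mulr_suml; apply: eq_bigr => i /eqP <-.
by rewrite (prim_expr_mod (omega_prim R N_gt0)).
Qed.

Section WeylEntries.
Variables (R : realType) (N : nat).
Local Notation w := (omega R N).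
Implicit Types (a b c d k l : 'I_N) (p : 'I_N -> 'I_N -> R).

Lemma mxpowN_shiftXE k a b : mxpowN (shiftX R N) k a b = (a == addN b k)%:R.
Proof.
suff Xn n a' : mxpowN (shiftX R N) n a' b = (val a' == (b + n) %% N)%N%:R by exact: Xn.
elim: n a' => [|n IHn] a' /=; first by rewrite mxE addn0 modn_small.
have bn_lt : ((b + n) %% N < N)%N by rewrite ltn_pmod // (leq_ltn_trans _ (ltn_ord b)).
rewrite mxE; under eq_bigr do rewrite IHn mulrC.
by rewrite (sum_delta (Ordinal bn_lt)) mxE /= modnDml addn1 addnS.
Qed.

Lemma mxpowN_clockZE (l : nat) a b :
  mxpowN (clockZ R N) l a b = (a == b)%:R * w ^+ (b * l).
Proof.
elim: l a => [|l IHl] a /=; first by rewrite mxE muln0 expr0 mulr1.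
rewrite mxE; under eq_bigr do rewrite IHl mxE mulrCA -mulrA.
by rewrite sum_delta mulnS exprD.
Qed.

Lemma weylUE k l a b : weylU R k l a b = (a == addN b k)%:R * w ^+ (b * l).
Proof.
rewrite mxE; under eq_bigr do rewrite mxpowN_shiftXE mxpowN_clockZE mulrCA.
exact: sum_delta.
Qed.

Lemma weyl_channelE p a b c d :
  weyl_channel p (mxtens_index (a, b)) (mxtens_index (c, d)) =
  \sum_k \sum_l (p k l)%:C * (weylU R k l a c * (weylU R k l b d)^*).
Proof.
rewrite summxE; apply: eq_bigr => k _; rewrite summxE; apply: eq_bigr => l _.
by rewrite mxE tensmxE [map_mx _ _ _ _]mxE.
Qed.

Lemma weyl_blockE p K j j' :
  weyl_block p K j j' = \sum_l (p (subN j j') l)%:C * w ^+ (K * l).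
Proof.
rewrite summxE; under eq_bigr do rewrite mxE mxpowN_shiftXE eq_addN mulrC.
exact: sum_delta.
Qed.

End WeylEntries.

Section WeylBlocks.
Variables (R : realType) (N : nat).
Hypothesis N_gt0 : (0 < N)%N.
Local Notation w := (omega R N).
Implicit Types (a b c d k l : 'I_N) (p : 'I_N -> 'I_N -> R).

Lemma omegaX_addN_mul_conj a b l : w ^+ (addN a b * l) * (w ^+ (a * l))^* = w ^+ (b * l).
Proof.
have w_prim := omega_prim R N_gt0.
have wl_root : (w ^+ l) ^+ N = 1 by rewrite exprAC (prim_expr_order w_prim) expr1n.
have wl_neq0 : w ^+ l != 0 by rewrite expf_neq0 // (prim_root_eq0 w_prim) -lt0n.
rewrite conj_omegaX !(mulnC _ l) !exprM expr_addN //.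
by rewrite mulrAC mulfV ?mul1r // expf_neq0.
Qed.

Lemma weyl_channel_block p K K' j j' :
  weyl_channel p (mxtens_index (addN j K, j)) (mxtens_index (addN j' K', j'))
  = if K == K' then weyl_block p K j j' else 0.
Proof.
have term k l :
    (p k l)%:C * (weylU R k l (addN j K) (addN j' K') * (weylU R k l j j')^*)
    = (k == subN j j')%:R * ((K == K')%:R * ((p k l)%:C * w ^+ (K' * l))).
  rewrite !weylUE (eq_addN j).
  case: (k =P subN j j') => [-> | _]; last by rewrite mul0r rmorph0 !(mul0r, mulr0).
  rewrite !mul1r addNAC subNK (inj_eq (@addNI _ j)) -(omegaX_addN_mul_conj j' K').
  ring.
rewrite weyl_channelE weyl_blockE.
under eq_bigr do under eq_bigr do rewrite term.
under eq_bigr do rewrite -mulr_sumr -mulr_sumr.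
by rewrite sum_delta; case: eqP => [<-|_]; rewrite ?mul1r ?mul0r.
Qed.

End WeylBlocks.

Section Circulant.
Variables (R : realType) (N : nat) (u : R[i]).
Hypothesis u_prim : N.-primitive_root u.
Local Notation X := (shiftX R N).
Implicit Types a b k m : 'I_N.

Let N_gt0 : (0 < N)%N := prim_order_gt0 u_prim.
Let uN : u ^+ N = 1 := prim_expr_order u_prim.
Let u_neq0 : u != 0. Proof. by rewrite (prim_root_eq0 u_prim) -lt0n. Qed.

Definition fourier_vec m : 'cV[R[i]]_N := \col_b (u ^+ b) ^- m.

Lemma mxpowN_shiftX_fourier k m :
  mxpowN X k *m fourier_vec m = u ^+ (m * k) *: fourier_vec m.
Proof.
apply/colP => a; rewrite !mxE.
under eq_bigr do rewrite mxpowN_shiftXE addNC eq_addN mxE.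
rewrite sum_delta expr_subN // exprMn invfM exprVn invrK mulrC.
by rewrite -[(u ^+ k) ^+ m]exprM mulnC.
Qed.

Lemma circulant_fourier (c : 'I_N -> R[i]) m :
  (\sum_k c k *: mxpowN X k) *m fourier_vec m
  = (\sum_k c k * u ^+ (m * k)) *: fourier_vec m.
Proof.
rewrite mulmx_suml scaler_suml; apply: eq_bigr => k _.
by rewrite -scalemxAl mxpowN_shiftX_fourier scalerA.
Qed.

Lemma sum_fourier_kernel a b :
  \sum_(m < N) (u ^+ a / u ^+ b) ^+ m = (b == a)%:R * N%:R.
Proof.
rewrite sum_unity_root_expr; last first.
  by rewrite exprMn exprVn -!exprM !(mulnC _ N) !exprM uN !expr1n invr1 mulr1.
have -> : (u ^+ a / u ^+ b == 1) = (b == a).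
  apply/eqP/eqP => [/divr1_eq/eqP | ->]; last by rewrite mulfV // expf_neq0.
  by rewrite (eq_prim_root_expr u_prim) !modn_small // => /eqP ab; apply: val_inj.
by case: eqP; rewrite ?mul1r ?mul0r.
Qed.

Lemma fourier_inversion (v : 'rV[R[i]]_N) a :
  \sum_m (v *m fourier_vec m) 0 0 * (u ^+ a) ^+ m = v 0 a * N%:R.
Proof.
under eq_bigr do rewrite mxE mulr_suml.
rewrite exchange_big /=.
under eq_bigr do under eq_bigr do rewrite mxE mulrAC -mulrA -exprVn -exprMn.
under eq_bigr do rewrite -mulr_sumr sum_fourier_kernel mulrCA.
exact: sum_delta.
Qed.

Lemma circulant_eigenvalue (c : 'I_N -> R[i]) z :
  eigenvalue (\sum_k c k *: mxpowN X k) z ->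
  exists m, z = \sum_k c k * u ^+ (m * k).
Proof.
case/eigenvalueP => v vB v_neq0.
have [m /eqP zm | z_neq] := pickP (fun m => z == \sum_k c k * u ^+ (m * k)).
  by exists m.
(* Otherwise v kills every Fourier vector, and Fourier inversion forces v = 0. *)
have vF0 m : v *m fourier_vec m = 0.
  have /eqP : (z - \sum_k c k * u ^+ (m * k)) *: (v *m fourier_vec m) = 0.
    by rewrite scalerBl scalemxAl -vB -mulmxA circulant_fourier scalemxAr subrr.
  by rewrite scalemx_eq0 subr_eq0 z_neq => /eqP.
exfalso; case/rV0Pn: v_neq0 => a; apply/negP; rewrite negbK.
have := fourier_inversion v a; under eq_bigr do rewrite vF0 mxE mul0r.
by rewrite big1 // => /esym/eqP; rewrite mulf_eq0 pnatr_eq0 gtn_eqF ?orbF.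
Qed.

End Circulant.

Section WeylSpectrum.
Variables (R : realType) (N : nat).
Hypothesis N_gt0 : (0 < N)%N.
Implicit Types (j k : 'I_N) (p : 'I_N -> 'I_N -> R).

(* (K, j) indexes |j (+) K, j>: K labels the diagonal block, j the position in it. *)
Definition shift_index (kj : 'I_N * 'I_N) : 'I_(N * N) :=
  mxtens_index (addN kj.2 kj.1, kj.2).

Definition shift_unindex (x : 'I_(N * N)) : 'I_N * 'I_N :=
  let: (a, b) := mxtens_unindex x in (subN a b, b).

Lemma shift_indexK : cancel shift_index shift_unindex.
Proof.
move=> [k j]; rewrite /shift_unindex mxtens_indexK; congr (_, _).
by apply/eqP; rewrite eq_sym -eq_addN.
Qed.

Lemma shift_unindexK : cancel shift_unindex shift_index.
Proof.
move=> x; rewrite /shift_unindex -[x in RHS]mxtens_unindexK.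
by case: (mxtens_unindex x) => a b; rewrite /shift_index subNK.
Qed.

Lemma weyl_channel_offdiag p K K' j j' : K != K' ->
  weyl_channel p (shift_index (K, j)) (shift_index (K', j')) = 0.
Proof. by move=> /negbTE nK; rewrite weyl_channel_block // nK. Qed.

Lemma diag_block_weyl_channel p K :
  diag_block shift_index (weyl_channel p) K = weyl_block p K.
Proof. by apply/matrixP => j j'; rewrite mxE weyl_channel_block // eqxx. Qed.

Lemma weyl_block0 p (K : 'I_N) : K = 0%N :> nat ->
  weyl_block p K = hyper_decoherence (weyl_channel p).
Proof.
move=> K0; have addN0 j : addN j K = j by apply: val_inj; rewrite /= K0 addn0 modn_small.
apply/matrixP => i j; rewrite mxE.
have -> : mxtens_index (i, i) = shift_index (K, i) by rewrite /shift_index addN0.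
have -> : mxtens_index (j, j) = shift_index (K, j) by rewrite /shift_index addN0.
by rewrite weyl_channel_block // eqxx.
Qed.

Lemma weyl_block_eigenvalue_in_Ngon p K z : prob_vector p ->
  eigenvalue (weyl_block p K) z -> in_Ngon N z.
Proof.
move=> [p_ge0 p_sum1] /(circulant_eigenvalue (omega_prim R N_gt0)) [m ->].
have -> : \sum_k (\sum_l (p k l)%:C * omega R N ^+ (K * l)) * omega R N ^+ (m * k)
    = \sum_(kl : 'I_N * 'I_N) (p kl.1 kl.2)%:C * omega R N ^+ (K * kl.2 + m * kl.1).
  rewrite -(pair_bigA _ (fun k l => (p k l)%:C * omega R N ^+ (K * l + m * k))).
  apply: eq_bigr => k _; rewrite mulr_suml.
  by apply: eq_bigr => l _; rewrite -mulrA -exprD.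
apply: (in_Ngon_convex (a := fun kl => p kl.1 kl.2)) => //.
by rewrite -(pair_bigA _ p).
Qed.

End WeylSpectrum.

Theorem proposition4 (R : realType) (N : nat) (hN : (2 <= N)%N)
    (p : 'I_N -> 'I_N -> R) (hp : prob_vector p) :
  (* block diagonal in the reordered basis |j (+) k, j>, with circulant blocks *)
  (forall (k k' j j' : 'I_N),
      weyl_channel p (mxtens_index (addN j k, j)) (mxtens_index (addN j' k', j'))
      = (if k == k' then weyl_block p k j j' else 0)) /\
  (* spectrum contained in the regular N-gon *)
  (forall z : R[i], eigenvalue (weyl_channel p) z -> in_Ngon N z) /\
  (* Phi^(0) = T(Phi) = sum_k q_k X^k with q_k = sum_l p_kl *)
  weyl_block p (Ordinal (leq_trans (isT : (0 < 2)%N) hN)) = hyper_decoherence (weyl_channel p) /\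
  hyper_decoherence (weyl_channel p)
    = \sum_(k < N) (\sum_(l < N) p k l)%:C *: mxpowN (shiftX R N) k /\
  (* spectrum of Phi contains spectrum of T(Phi) *)
  (forall z : R[i], eigenvalue (hyper_decoherence (weyl_channel p)) z ->
     eigenvalue (weyl_channel p) z).
Proof.
have N_gt0 : (0 < N)%N := ltnW hN.
set K0 := Ordinal _.
have spectrum z := eigenvalue_block_diagP (@shift_indexK N) (@shift_unindexK N)
  (weyl_channel_offdiag N_gt0 p) z.
have T0 : weyl_block p K0 = hyper_decoherence (weyl_channel p) by exact: weyl_block0.
split; first exact: weyl_channel_block.
split.
  move=> z /spectrum [K]; rewrite diag_block_weyl_channel //.
  exact: weyl_block_eigenvalue_in_Ngon.
split; first exact: T0.
split.
  rewrite -T0; apply: eq_bigr => k _; rewrite rmorph_sum; congr (_ *: _).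
  by apply: eq_bigr => l _; rewrite mul0n expr0 mulr1.
move=> z; rewrite -T0 -(diag_block_weyl_channel N_gt0) => Tz.
by apply/spectrum; exists K0.
Qed.
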